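(* Let $n\ge2$ and let $A=(a_{ij})$ be an $n\times n$ nonnegative irreducible matrix with row sums $r_1\ge r_2\ge\cdots\ge r_n$ (where $r_i=\sum_j a_{ij}$). Let $M=\max_{1\le i\le n}a_{ii}$ and $N=\max_{i\ne j}a_{ij}$, and assume $N>0$. Then for $1\le i\le n$, \[\rho(A)\le \frac{r_i+M-N+\sqrt{(r_i-M+N)^2+4N\sum_{k=1}^{i-1}(r_k-r_i)}}{2}.\] Equality holds if and only if $r_1=\cdots=r_n$, or for some $2\le t\le i$: (i) $a_{kk}=M$ for $1\le k\le t-1$; (ii) $a_{kl}=N$ for all $1\le k\le n$, $1\le l\le t-1$, $k\ne l$; (iii) $r_t=\cdots=r_n$.
   Context: $\rho(A)$ denotes the spectral radius of $A$. An empty sum equals $0$. *)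

From HB Require Import structures.
From mathcomp Require Import all_boot all_order all_algebra.
Set Implicit Arguments. Unset Strict Implicit. Unset Printing Implicit Defensive.
Import Order.TTheory GRing.Theory Num.Theory.
Local Open Scope ring_scope.

(* A list of the eigenvalues (with algebraic multiplicity) of a square
   matrix over an algebraically closed numeric field: the roots of its
   characteristic polynomial. *)
Definition eigen_seq (C : numClosedFieldType) (n : nat) (A : 'M[C]_n) : seq C :=
  sval (closed_field_poly_normal (char_poly A)).

Definition spectral_radius (C : numClosedFieldType) (n : nat) (A : 'M[C]_n) : C :=
  \big[Num.max/0]_(z <- eigen_seq A) `|z|.

(* Irreducibility: A is not permutation-similar to a block upper triangular
   matrix [[B, *], [0, D]] with square nonempty B, D; i.e. there is no
   nonempty proper index set S with a_ij = 0 for all i not in S, j in S. *)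
Definition irreducible_mx (C : numClosedFieldType) (n : nat) (A : 'M[C]_n) : Prop :=
  forall S : {set 'I_n}, S != set0 -> S != setT ->
    exists i j, [/\ i \notin S, j \in S & A i j != 0].

Definition row_sum (C : numClosedFieldType) (n : nat) (A : 'M[C]_n) (i : 'I_n) : C :=
  \sum_(j < n) A i j.

From HB Require Import structures.
From mathcomp Require Import all_boot all_order all_algebra.
From mathcomp Require Import ring.
Import Order.TTheory GRing.Theory Num.Theory.
Set Implicit Arguments. Unset Strict Implicit. Unset Printing Implicit Defensive.
Local Open Scope ring_scope.

(* Write r_k for the row sums (sorted decreasingly), S = sum_(k < i) (r_k - r_i),
   and b for the claimed bound; b is the larger root of
   (b - r_i) (b - M + N) = N S, and q := b - M + N is positive.  Put
   e_l = (r_l - r_i) / q for l < i, e_l = 0 otherwise, and x_l = 1 + e_l.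
   Replacing every diagonal entry of A by M and every other entry by N shows
   A x + g = b x for an explicit slack vector g >= 0.

   A Collatz-Wielandt argument turns such a positive "supervector" into the
   spectral bound: if A >= 0, x > 0, g >= 0 and A x + g = b x, then every
   eigenvalue z has |z| <= b (compare an eigenvector v with x at a
   coordinate where |v_l| / x_l is maximal); when A is irreducible, |z| = b
   forces g = 0, because the coordinates where |v_l| / x_l is maximal are
   closed under the edges of A.  Conversely g = 0 makes x an eigenvector
   for b.  Hence rho(A) <= b, with equality iff g = 0, and g = 0 is exactly
   the equality pattern of the statement. *)

Lemma max_ge0_cases {R : numDomainType} {x y : R} : 0 <= x -> 0 <= y ->
  [/\ x <= Num.max x y, y <= Num.max x y &
      Num.max x y = x \/ Num.max x y = y].
Proof.
move=> x0 y0; case: (real_leP (ger0_real x0) (ger0_real y0)) => h.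
- by split => //; right.
- by split => //; [exact: ltW | left].
Qed.

(* Maxima (with default 0) of nonnegative families, in a numeric domain
   where the order need not be total. *)
Section NonnegBigMax.
Variables (R : numDomainType) (I : eqType) (P : pred I) (F : I -> R).
Hypothesis F_ge0 : forall x, P x -> 0 <= F x.

Lemma bigmax0_ge0 s : 0 <= \big[Num.max/0]_(x <- s | P x) F x.
Proof.
elim: s => [|a s IH]; rewrite ?big_nil ?big_cons //.
case: ifP => // Pa; have [h _ _] := max_ge0_cases (F_ge0 Pa) IH.
exact: le_trans (F_ge0 Pa) h.
Qed.

Lemma bigmax0_ub s x : x \in s -> P x -> F x <= \big[Num.max/0]_(x <- s | P x) F x.
Proof.
elim: s => [|a s IH] //; rewrite in_cons big_cons => /orP[/eqP->|xs] Px.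
  by rewrite Px; have [] := max_ge0_cases (F_ge0 Px) (bigmax0_ge0 s).
case: ifP => Pa; last exact: IH.
have [_ h _] := max_ge0_cases (F_ge0 Pa) (bigmax0_ge0 s).
exact: le_trans (IH xs Px) h.
Qed.

Lemma bigmax0_attained s : \big[Num.max/0]_(x <- s | P x) F x = 0 \/
  exists x, [/\ x \in s, P x & F x = \big[Num.max/0]_(x <- s | P x) F x].
Proof.
elim: s => [|a s IH]; rewrite ?big_nil ?big_cons; first by left.
have lift : (exists x, [/\ x \in s, P x & F x = \big[Num.max/0]_(x <- s | P x) F x]) ->
    exists x, [/\ x \in a :: s, P x & F x = \big[Num.max/0]_(x <- s | P x) F x].
  by case=> x [xs Px E]; exists x; rewrite in_cons xs orbT.
case: ifP => Pa; last by case: IH => [|/lift]; [left | right].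
have [_ _ [->|->]] := max_ge0_cases (F_ge0 Pa) (bigmax0_ge0 s).
  by right; exists a; rewrite in_cons eqxx.
by case: IH => [|/lift]; [left | right].
Qed.

End NonnegBigMax.

Lemma char_poly_tr (R : comNzRingType) n (A : 'M[R]_n) : char_poly A^T = char_poly A.
Proof.
rewrite /char_poly -det_tr; congr (\det _); apply/matrixP => a b.
by rewrite !mxE eq_sym.
Qed.

Lemma eigen_seqP {C : numClosedFieldType} {n} (A : 'M[C]_n) z :
  z \in eigen_seq A <->
  exists2 v : 'I_n -> C, (forall k, z * v k = \sum_l A k l * v l) & exists l, v l != 0.
Proof.
rewrite /eigen_seq; case: closed_field_poly_normal => rs /= E.
have -> : (z \in rs) = root (char_poly A) z.
  rewrite E rootZ ?root_prod_XsubC //.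
  by rewrite (monicP (char_poly_monic A)) oner_eq0.
rewrite -char_poly_tr -eigenvalue_root_char.
split => [/eigenvalueP [w w_eig w_neq0] | [v v_eig [l0 v_l0]]].
  exists (fun l => w 0 l).
    move=> k; have := congr1 (fun B : 'rV_n => B 0 k) w_eig; rewrite !mxE => <-.
    by apply: eq_bigr => l _; rewrite !mxE mulrC.
  apply/existsP; move: w_neq0; apply: contraR; rewrite negb_exists => /forallP w0.
  by apply/eqP/matrixP => a l; rewrite (ord1 a) mxE; apply/eqP; move: (w0 l); rewrite negbK.
apply/eigenvalueP; exists (\row_l v l).
  apply/matrixP => a k; rewrite (ord1 a) !mxE v_eig.
  by apply: eq_bigr => l _; rewrite !mxE mulrC.
by apply/eqP => /matrixP /(_ 0 l0); rewrite !mxE; exact/eqP.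
Qed.

Section CollatzWielandt.
Variables (C : numClosedFieldType) (n : nat) (A : 'M[C]_n) (x g : 'I_n -> C) (b : C).
Hypotheses (A_ge0 : forall k l, 0 <= A k l) (x_gt0 : forall l, 0 < x l)
  (g_ge0 : forall k, 0 <= g k) (Ax_eq : forall k, \sum_l A k l * x l + g k = b * x k).

Section Eigenvector.
Variables (z : C) (v : 'I_n -> C).
Hypotheses (v_eig : forall k, z * v k = \sum_l A k l * v l) (v_neq0 : exists l, v l != 0).

Let u l := `|v l| / x l.
Let m := \big[Num.max/0]_(l < n) u l.

Let u_ge0 l : 0 <= u l.
Proof. by apply: divr_ge0 => //; exact: ltW. Qed.

Let u_le_m l : u l <= m.
Proof. exact: (bigmax0_ub (fun l _ => u_ge0 l) (mem_index_enum l)). Qed.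

Let m_gt0 : 0 < m.
Proof.
have [l v_l] := v_neq0; apply: lt_le_trans (u_le_m l).
by apply: divr_gt0; rewrite ?normr_gt0.
Qed.

Let m_attained : exists k, u k = m.
Proof.
case: (bigmax0_attained (fun l (_ : true) => u_ge0 l) (index_enum 'I_n)).
  by move=> m0; move: m_gt0; rewrite /m m0 ltxx.
by move=> [k [_ _ E]]; exists k.
Qed.

Let norm_v l : `|v l| = x l * u l.
Proof. by rewrite /u mulrC divfK // gt_eqF. Qed.

(* Row k of A v = z v, estimated through |v_l| = x_l u_l <= x_l m. *)
Let row_chain k : `|z| * `|v k| <= \sum_l A k l * x l * u l /\
  \sum_l A k l * x l * u l <= (b * x k - g k) * m.
Proof.
split.
  rewrite -normrM v_eig; apply: le_trans (ler_norm_sum _ _ _) _.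
  by apply: ler_sum => l _; rewrite normrM ger0_norm // norm_v mulrA.
rewrite -Ax_eq addrK mulr_suml; apply: ler_sum => l _.
by apply: ler_wpM2l => //; apply: mulr_ge0 => //; exact: ltW.
Qed.

(* At a coordinate where u is maximal, row_chain yields |z| <= b. *)
Lemma norm_eigen_le : `|z| <= b.
Proof.
have [k0 u_k0] := m_attained; have [c1 c2] := row_chain k0.
rewrite norm_v u_k0 in c1.
have xm_gt0 : 0 < x k0 * m by apply: mulr_gt0.
rewrite -(ler_pM2r xm_gt0); apply: le_trans (le_trans c1 c2) _.
rewrite mulrA ler_wpM2r //; first exact: ltW.
by rewrite mulrC gerDl oppr_le0.
Qed.

(* If |z| = b, both inequalities of row_chain are tight at any coordinate
   where u is maximal: the slack vanishes there and u is maximal at every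
   out-neighbour. *)
Let max_set_closed k : `|z| = b -> u k = m ->
  g k = 0 /\ forall l, A k l != 0 -> u l = m.
Proof.
move=> zb ukm; have [c1 c2] := row_chain k; rewrite norm_v ukm zb in c1.
have gk : g k = 0.
  have : g k * m <= 0.
    by have := le_trans c1 c2; rewrite mulrBl -[b * x k * m]mulrA lerDl oppr_ge0.
  by rewrite pmulr_lle0 // => gk_le0; apply: le_anti; rewrite gk_le0 g_ge0.
split => // l Akl.
have gap_sum0 : \sum_l (A k l * x l * m - A k l * x l * u l) = 0.
  rewrite sumrB; apply/eqP; rewrite subr_eq0 eq_le; apply/andP; split.
    apply: le_trans c1; rewrite -mulr_suml.
    by have := Ax_eq k; rewrite gk addr0 => ->; rewrite mulrA.
  by apply: ler_sum => l' _; apply: ler_wpM2l => //; apply: mulr_ge0 => //; exact: ltW.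
have gap_ge0 l' : true -> 0 <= A k l' * x l' * m - A k l' * x l' * u l'.
  move=> _; rewrite -mulrBr; apply: mulr_ge0; last by rewrite subr_ge0.
  by apply: mulr_ge0 => //; exact: ltW.
have := psumr_eq0P gap_ge0 gap_sum0 (i := l) isT; rewrite -mulrBr => /eqP.
rewrite !mulf_eq0 (negbTE Akl) (gt_eqF (x_gt0 l)) /= subr_eq0 => /eqP.
by move=> ->.
Qed.

(* By irreducibility the set where u is maximal is everything, so an
   eigenvalue of modulus b forces the slack to vanish. *)
Lemma eigen_slack0 : irreducible_mx A -> `|z| = b -> forall k, g k = 0.
Proof.
move=> A_irr zb.
have [k0 u_k0] := m_attained.
pose Smax := [set k | u k == m].
have all_max k : k \in Smax.
  apply/negPn/negP => kS.
  have [||a [c [aT cT Aac]]] := A_irr (~: Smax).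
  - by apply/set0Pn; exists k; rewrite in_setC.
  - apply/eqP => E; have : k0 \in ~: Smax by rewrite E inE.
    by rewrite in_setC inE u_k0 eqxx.
  move: aT cT; rewrite !in_setC !inE negbK => /eqP ua /eqP uc.
  by apply: uc; have [_] := max_set_closed zb ua; apply.
by move=> k; have := all_max k; rewrite inE => /eqP /(max_set_closed zb) [].
Qed.

End Eigenvector.

Hypothesis n_gt0 : (0 < n)%N.

Let b_ge0 : 0 <= b.
Proof.
pose k0 := Ordinal n_gt0; rewrite -(pmulr_lge0 _ (x_gt0 k0)) -Ax_eq.
apply: addr_ge0 => //; apply: sumr_ge0 => l _.
by apply: mulr_ge0 => //; exact: ltW.
Qed.

Lemma spectral_radius_le : spectral_radius A <= b.
Proof.
rewrite /spectral_radius big_seq_cond; apply: bigmax_le => // z /andP [z_in _].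
have [v v_eig v_neq0] := (eigen_seqP A z).1 z_in.
exact: norm_eigen_le v_eig v_neq0.
Qed.

(* For irreducible A the bound is reached exactly when the slack vanishes:
   one direction by eigen_slack0, the other because x is then an
   eigenvector for b. *)
Lemma spectral_radius_eq : irreducible_mx A -> spectral_radius A = b <-> forall k, g k = 0.
Proof.
move=> A_irr; split => [rho_b | g0].
  case: (bigmax0_attained (fun z (_ : true) => normr_ge0 z) (eigen_seq A))
    => [|[z [z_in _]]]; rewrite -/(spectral_radius A) rho_b.
    move=> b_eq0 k; have /eqP := Ax_eq k.
    rewrite b_eq0 mul0r paddr_eq0 ?sumr_ge0 // => [/andP [_ /eqP //]|l _].
    by apply: mulr_ge0 => //; exact: ltW.
  move=> z_max; have [v v_eig v_neq0] := (eigen_seqP A z).1 z_in.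
  exact: eigen_slack0 v_eig v_neq0 A_irr z_max.
apply: le_anti; rewrite spectral_radius_le /= -{1}(ger0_norm b_ge0).
apply: (bigmax0_ub (fun z _ => normr_ge0 z)) => //.
apply/eigen_seqP; exists x => [k|]; first by rewrite -Ax_eq g0 addr0.
by exists (Ordinal n_gt0); rewrite gt_eqF.
Qed.

End CollatzWielandt.

(* The test vector for the row-sum bound.  M and N are only required to bound
   the diagonal and off-diagonal entries, with M at most some row sum. *)
Section RowSumBound.
Variables (C : numClosedFieldType) (n : nat) (A : 'M[C]_n) (M N : C) (i : 'I_n).
Hypotheses (A_ge0 : forall k l, 0 <= A k l)
  (rows_sorted : forall k l : 'I_n, (k <= l)%N -> row_sum A l <= row_sum A k)
  (diag_le : forall k, A k k <= M) (offdiag_le : forall k l, k != l -> A k l <= N)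
  (N_gt0 : 0 < N) (M_le_row : exists k, M <= row_sum A k).

Local Notation r := (row_sum A).

Definition head_excess : C := \sum_(k < n | (k < i)%N) (row_sum A k - row_sum A i).

(* The claimed bound b, the larger root of (b - r_i)(b - M + N) = N S. *)
Definition row_bound : C :=
  (row_sum A i + M - N
    + sqrtC ((row_sum A i - M + N) ^+ 2 + 4%:R * N * head_excess)) / 2%:R.

Definition bound_shift : C := row_bound - M + N.

Definition excess_weight (l : 'I_n) : C :=
  if (l < i)%N then (row_sum A l - row_sum A i) / bound_shift else 0.

Definition test_vector (l : 'I_n) : C := 1 + excess_weight l.

Definition entry_cap (k l : 'I_n) : C := if k == l then M else N.

Definition row_defect (k : 'I_n) : C :=
  row_sum A i - row_sum A k + bound_shift * excess_weight k.

Definition slack (k : 'I_n) : C :=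
  \sum_l (entry_cap k l - A k l) * excess_weight l + row_defect k.

Let r_ge0 (k : 'I_n) : 0 <= r k.
Proof. exact: sumr_ge0. Qed.

Let later_le (k : 'I_n) : (i <= k)%N -> r k <= r i.
Proof. exact: rows_sorted. Qed.

Let earlier_ge (k : 'I_n) : (k < i)%N -> r i <= r k.
Proof. by move=> /ltnW; exact: rows_sorted. Qed.

Lemma head_excess_ge0 : 0 <= head_excess.
Proof. by apply: sumr_ge0 => k /earlier_ge; rewrite subr_ge0. Qed.

(* If r_i < M then some row before i exceeds row i (since M is at most a
   row sum), so S > 0. *)
Lemma head_excess_gt0 : r i < M -> 0 < head_excess.
Proof.
move=> ri_lt_M; have [k0 M_le_k0] := M_le_row.
have ri_lt_k0 : r i < r k0 := lt_le_trans ri_lt_M M_le_k0.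
have k0_lt_i : (k0 < i)%N.
  by rewrite ltnNge; apply/negP => /later_le /(lt_le_trans ri_lt_k0); rewrite ltxx.
rewrite /head_excess (bigD1 k0) //=; apply: (lt_le_trans (y := r k0 - r i)).
  by rewrite subr_gt0.
rewrite lerDl; apply: sumr_ge0 => k /andP [/earlier_ge ki _].
by rewrite subr_ge0.
Qed.

Let discr := (r i - M + N) ^+ 2 + 4%:R * N * head_excess.

Let M_ge0 : 0 <= M.
Proof. exact: le_trans (A_ge0 i i) (diag_le i). Qed.

Let center_real : r i - M + N \is Num.real.
Proof. by rewrite realD ?realB ?ger0_real // ltW. Qed.

Let discr_ge0 : 0 <= discr.
Proof.
apply: addr_ge0; first by rewrite -realEsqr.
by rewrite !mulr_ge0 ?ler0n ?head_excess_ge0 // ltW.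
Qed.

Lemma row_bound_quadratic : (row_bound - r i) * bound_shift = N * head_excess.
Proof.
rewrite /bound_shift /row_bound -/discr; set s := sqrtC discr.
have s2 : s ^+ 2 = discr by rewrite sqrtCK.
apply/eqP; rewrite -subr_eq0; apply/eqP.
have -> : ((r i + M - N + s) / 2%:R - r i) * ((r i + M - N + s) / 2%:R - M + N)
    - N * head_excess = (s ^+ 2 - discr) / 4%:R by rewrite /discr; field.
by rewrite s2 subrr mul0r.
Qed.

(* q = (r_i - M + N + sqrt D) / 2 > 0: clear if r_i - M + N > 0, and
   otherwise S > 0 makes sqrt D exceed |r_i - M + N|. *)
Lemma bound_shift_gt0 : 0 < bound_shift.
Proof.
have -> : bound_shift = (r i - M + N + sqrtC discr) / 2%:R.
  by rewrite /bound_shift /row_bound; field.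
apply: divr_gt0; last by rewrite ltr0n.
case: (real_ltP (real0 C) center_real) => [c_gt0 | c_le0].
  by apply: (lt_le_trans c_gt0); rewrite lerDl sqrtC_ge0.
have ri_lt_M : r i < M.
  by apply: (lt_le_trans (y := r i + N)); rewrite ?ltrDl // -subr_le0 addrAC.
have : (- (r i - M + N)) ^+ 2 < sqrtC discr ^+ 2.
  rewrite sqrtCK sqrrN /discr -[X in X < _]addr0 ltrD2l.
  by rewrite !mulr_gt0 ?ltr0n ?head_excess_gt0.
rewrite ltr_sqr ?nnegrE ?oppr_ge0 ?sqrtC_ge0 //.
by rewrite -subr_gt0 opprK addrC.
Qed.

Lemma excess_weight_ge0 (l : 'I_n) : 0 <= excess_weight l.
Proof.
rewrite /excess_weight; case: ifP => // /earlier_ge li.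
by rewrite divr_ge0 ?subr_ge0 // ltW // bound_shift_gt0.
Qed.

Lemma test_vector_gt0 (l : 'I_n) : 0 < test_vector l.
Proof. by apply: (lt_le_trans ltr01); rewrite lerDl excess_weight_ge0. Qed.

Lemma row_defect_head (k : 'I_n) : (k < i)%N -> row_defect k = 0.
Proof.
move=> ki; rewrite /row_defect /excess_weight ki mulrC divfK; last first.
  by rewrite gt_eqF // bound_shift_gt0.
by rewrite addrC subrKA subrr.
Qed.

Lemma row_defect_ge0 (k : 'I_n) : 0 <= row_defect k.
Proof.
case: (ltnP k i) => [/row_defect_head -> // | ik].
by rewrite /row_defect /excess_weight ltnNge ik mulr0 addr0 subr_ge0 later_le.
Qed.

Lemma entry_cap_ge (k l : 'I_n) : 0 <= entry_cap k l - A k l.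
Proof. by rewrite subr_ge0 /entry_cap; case: eqP => [<-|/eqP /offdiag_le]. Qed.

Lemma slack_ge0 (k : 'I_n) : 0 <= slack k.
Proof.
rewrite addr_ge0 ?row_defect_ge0 // sumr_ge0 // => l _.
by rewrite mulr_ge0 ?entry_cap_ge ?excess_weight_ge0.
Qed.

(* N * sum_l e_l = N S / q = b - r_i by the quadratic. *)
Lemma sum_excess_weight : N * \sum_l excess_weight l = row_bound - r i.
Proof.
have -> : \sum_l excess_weight l = head_excess / bound_shift.
  rewrite /head_excess mulr_suml [RHS]big_mkcond /=.
  by apply: eq_bigr => l _; rewrite /excess_weight; case: ifP.
by rewrite mulrA -row_bound_quadratic mulfK // gt_eqF // bound_shift_gt0.
Qed.

Lemma test_vector_eq (k : 'I_n) :
  \sum_l A k l * test_vector l + slack k = row_bound * test_vector k.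
Proof.
have Ax : \sum_l A k l * test_vector l = r k + \sum_l A k l * excess_weight l.
  rewrite /row_sum -big_split /=.
  by apply: eq_bigr => l _; rewrite /test_vector mulrDr mulr1.
have cap_sum : \sum_l entry_cap k l * excess_weight l
    = N * \sum_l excess_weight l + (M - N) * excess_weight k.
  rewrite (bigD1 k) //= [X in N * X](bigD1 k) //= /entry_cap eqxx mulrDr mulr_sumr.
  rewrite (eq_bigr (fun l => N * excess_weight l)); first by ring.
  by move=> l /negbTE; rewrite eq_sym => ->.
have -> : slack k = \sum_l entry_cap k l * excess_weight l
    - \sum_l A k l * excess_weight l + row_defect k.
  by rewrite /slack -sumrB; congr (_ + _); apply: eq_bigr => l _; rewrite mulrBl.
rewrite Ax cap_sum sum_excess_weight /row_defect /test_vector /bound_shift; ring.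
Qed.

Lemma slack0P (k : 'I_n) : slack k = 0 <->
  (forall l, (entry_cap k l - A k l) * excess_weight l = 0) /\ row_defect k = 0.
Proof.
have term_ge0 l : true -> 0 <= (entry_cap k l - A k l) * excess_weight l.
  by move=> _; rewrite mulr_ge0 ?entry_cap_ge ?excess_weight_ge0.
split => [/eqP | [terms0 defect0]]; last first.
  by rewrite /slack defect0 addr0; apply: big1 => l _; exact: terms0.
rewrite /slack paddr_eq0 ?sumr_ge0 ?row_defect_ge0 // => /andP [/eqP sum0 /eqP].
by split=> // l; exact: (psumr_eq0P term_ge0 sum0 (i := l)).
Qed.

Definition equality_pattern : Prop :=
  (forall k l : 'I_n, row_sum A k = row_sum A l) \/
  exists t : 'I_n, [/\ (1 <= t)%N, (t <= i)%N,
     (forall k : 'I_n, (k < t)%N -> A k k = M),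
     (forall k l : 'I_n, (l < t)%N -> k != l -> A k l = N) &
     (forall k : 'I_n, (t <= k)%N -> row_sum A k = row_sum A t)].

(* If g = 0, let t be the first row with r_t = r_i: the rows from t on have
   equal sums, and for l < t the weight e_l is positive, which forces column l
   to meet its caps. *)
Lemma slack0_pattern : (forall k, slack k = 0) -> equality_pattern.
Proof.
move=> slack0.
have terms0 k l : (entry_cap k l - A k l) * excess_weight l = 0.
  by have [terms0 _] := (slack0P k).1 (slack0 k).
have defect0 k : row_defect k = 0 by have [_ defect0] := (slack0P k).1 (slack0 k).
have [t /eqP rt t_min] :=
  @arg_minnP _ i (fun j => r j == r i) (fun j => nat_of_ord j) (eqxx _).
have ti : (t <= i)%N by exact: t_min.
have tail_eq (k : 'I_n) : (t <= k)%N -> r k = r i.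
  move=> tk; case: (ltnP k i) => ki.
    by apply: le_anti; rewrite earlier_ge // andbT -rt rows_sorted.
  have := defect0 k; rewrite /row_defect /excess_weight ltnNge ki /= mulr0 addr0.
  by move/eqP; rewrite subr_eq0 eq_sym => /eqP.
have weight_neq0 (l : 'I_n) : (l < t)%N -> excess_weight l != 0.
  move=> lt; rewrite /excess_weight (leq_trans lt ti) mulf_neq0 //; last first.
    by rewrite invr_eq0 gt_eqF // bound_shift_gt0.
  by rewrite subr_eq0; apply/negP => /t_min; rewrite leqNgt lt.
case: (ltnP 0 t) => t_gt0; last first.
  by left => k l; rewrite !tail_eq // (leq_trans t_gt0 (leq0n _)).
right; exists t; split => //.
- move=> k kt; have := terms0 k k; rewrite /entry_cap eqxx => /eqP.
  by rewrite mulf_eq0 (negbTE (weight_neq0 k kt)) orbF subr_eq0 => /eqP ->.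
- move=> k l lt kl; have := terms0 k l; rewrite /entry_cap (negbTE kl) => /eqP.
  by rewrite mulf_eq0 (negbTE (weight_neq0 l lt)) orbF subr_eq0 => /eqP ->.
- by move=> k tk; rewrite tail_eq // rt.
Qed.

Lemma pattern_slack0 : equality_pattern -> forall k, slack k = 0.
Proof.
case=> [rows_eq | [t [_ ti diag_eq off_eq tail_eq]]] k; apply/slack0P.
  have weight0 l : excess_weight l = 0.
    by rewrite /excess_weight (rows_eq l i) subrr mul0r if_same.
  split=> [l|]; first by rewrite weight0 mulr0.
  by rewrite /row_defect weight0 mulr0 addr0 (rows_eq i k) subrr.
have rt : r t = r i by rewrite (tail_eq i ti).
have weight0 (l : 'I_n) : (t <= l)%N -> excess_weight l = 0.
  by move=> tl; rewrite /excess_weight (tail_eq l tl) rt subrr mul0r if_same.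
split=> [l|].
  case: (ltnP l t) => lt; last by rewrite weight0 // mulr0.
  rewrite /entry_cap; case: eqP => [kl|/eqP kl]; last by rewrite off_eq // subrr mul0r.
  by rewrite -kl diag_eq ?subrr ?mul0r // kl.
case: (ltnP k i) => ki; first exact: row_defect_head.
have tk := leq_trans ti ki.
by rewrite /row_defect weight0 // mulr0 addr0 (tail_eq k tk) rt subrr.
Qed.

End RowSumBound.

Lemma diag_le_row_sum (C : numClosedFieldType) n (A : 'M[C]_n) :
  (forall k l, 0 <= A k l) -> forall k, A k k <= row_sum A k.
Proof. by move=> A_ge0 k; rewrite /row_sum (bigD1 k) //= lerDl sumr_ge0. Qed.

(* Main theorem.  M and N bound the entries and M is at most a row sum, so the
   test vector of RowSumBound is a Collatz-Wielandt supervector for the bound. *)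
Theorem corollary1 (C : numClosedFieldType) (n : nat) (A : 'M[C]_n)
  (hn : (2 <= n)%N)
  (hnonneg : forall i j, 0 <= A i j)
  (hirr : irreducible_mx A)
  (hsorted : forall i j : 'I_n, (i <= j)%N -> row_sum A j <= row_sum A i)
  (M N : C)
  (hM : M = \big[Num.max/0]_(k < n) A k k)
  (hN : N = \big[Num.max/0]_(k < n) \big[Num.max/0]_(l < n | k != l) A k l)
  (hNpos : 0 < N)
  (i : 'I_n) :
  let bound :=
    (row_sum A i + M - N
      + sqrtC ((row_sum A i - M + N) ^+ 2
               + 4%:R * N * \sum_(k < n | (k < i)%N) (row_sum A k - row_sum A i))) / 2%:R in
  spectral_radius A <= bound /\
  (spectral_radius A = bound <->
     (forall k l : 'I_n, row_sum A k = row_sum A l) \/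
     exists t : 'I_n, [/\ (1 <= t)%N, (t <= i)%N,
        (forall k : 'I_n, (k < t)%N -> A k k = M),
        (forall k l : 'I_n, (l < t)%N -> k != l -> A k l = N) &
        (forall k : 'I_n, (t <= k)%N -> row_sum A k = row_sum A t)]).
Proof.
have diag_le k : A k k <= M.
  by rewrite hM (bigmax0_ub (fun k _ => hnonneg k k) (mem_index_enum k)).
have offdiag_le k l : k != l -> A k l <= N.
  have row_max_ge0 k' : true -> 0 <= \big[Num.max/0]_(l < n | k' != l) A k' l.
    by move=> _; apply: bigmax0_ge0 => l' _; exact: hnonneg.
  move=> kl; rewrite hN; apply: le_trans (bigmax0_ub row_max_ge0 (mem_index_enum k) isT).
  exact: (bigmax0_ub (fun l' _ => hnonneg k l') (mem_index_enum l) kl).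
have M_le_row : exists k, M <= row_sum A k.
  have [M0 | [k [_ _ Mk]]] :=
    bigmax0_attained (fun k (_ : true) => hnonneg k k) (index_enum 'I_n).
    by exists i; rewrite hM M0; apply: sumr_ge0.
  by exists k; rewrite hM -Mk diag_le_row_sum.
have Ax := test_vector_eq i hnonneg hsorted diag_le hNpos M_le_row.
have x_gt0 := test_vector_gt0 i hnonneg hsorted diag_le hNpos M_le_row.
have g_ge0 := slack_ge0 i hnonneg hsorted diag_le offdiag_le hNpos M_le_row.
have n_gt0 : (0 < n)%N := ltnW hn.
change (spectral_radius A <= row_bound A M N i /\
  (spectral_radius A = row_bound A M N i <-> equality_pattern A M N i)).
split; first exact: spectral_radius_le Ax n_gt0.
rewrite (spectral_radius_eq hnonneg x_gt0 g_ge0 Ax n_gt0 hirr).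
split; [exact: slack0_pattern | exact: pattern_slack0].
Qed.
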